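(* If a formula $\varphi$ is satisfiable in a PWK-Kripke model, then it is satisfiable in a PWK-Kripke model $(W,R,v)$ with $W$ finite.
   Context: Formulas are built from a countably infinite set of propositional variables and the constants $0,1$ using the unary connectives $\neg$, $J_2$, $\Box$ and the binary connective $\vee$. Let $\mathbf{WK}^e$ be the algebra on $\{0,\tfrac12,1\}$ with $\neg0=1$, $\neg1=0$, $\neg\tfrac12=\tfrac12$; $a\vee b=\tfrac12$ if $a=\tfrac12$ or $b=\tfrac12$, otherwise $a\vee b=\max(a,b)$; $J_2(1)=1$, $J_2(\tfrac12)=J_2(0)=0$. A PWK-Kripke model is a triple $(W,R,v)$ with $W\neq\emptyset$, $R\subseteq W\times W$, $v:W\times\mathrm{Fm}\to\{0,\tfrac12,1\}$ such that for each $w$, $v(w,\cdot)$ commutes with $\neg,\vee,J_2,0,1$ as computed in $\mathbf{WK}^e$, and: $v(w,\Box\varphi)=\tfrac12$ iff $v(w,\varphi)=\tfrac12$; $v(w,\Box\varphi)=1$ iff $v(w,\varphi)\neq\tfrac12$ and $v(s,\varphi)\neq0$ for all $s$ with $wRs$; $v(w,\Box\varphi)=0$ iff $v(w,\varphi)\neq\tfrac12$ and $v(s,\varphi)=0$ for some $s$ with $wRs$. A formula $\varphi$ is satisfiable in a PWK-Kripke model $(W,R,v)$ if $v(w,\varphi)\neq0$ for some $w\in W$. *)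

From mathcomp Require Import all_boot.

(* Truth values of WK^e: 0, 1/2, 1 *)
Inductive wk := W0 | Wh | W1.

Definition wk_neg (a : wk) : wk :=
  match a with W0 => W1 | Wh => Wh | W1 => W0 end.

Definition wk_or (a b : wk) : wk :=
  match a, b with
  | Wh, _ | _, Wh => Wh
  | W1, _ | _, W1 => W1
  | W0, W0 => W0
  end.

Definition wk_J2 (a : wk) : wk :=
  match a with W1 => W1 | _ => W0 end.

Inductive Fm :=
  | FVar : nat -> Fm
  | FZero : Fm
  | FOne : Fm
  | FNeg : Fm -> Fm
  | FJ2 : Fm -> Fm
  | FBox : Fm -> Fm
  | FOr : Fm -> Fm -> Fm.

Definition PWK_model (W : Type) (R : W -> W -> Prop) (v : W -> Fm -> wk) : Prop :=
  inhabited W /\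
  forall w : W,
    v w FZero = W0 /\ v w FOne = W1 /\
    (forall phi, v w (FNeg phi) = wk_neg (v w phi)) /\
    (forall phi, v w (FJ2 phi) = wk_J2 (v w phi)) /\
    (forall phi psi, v w (FOr phi psi) = wk_or (v w phi) (v w psi)) /\
    (forall phi,
       (v w (FBox phi) = Wh <-> v w phi = Wh) /\
       (v w (FBox phi) = W1 <-> (v w phi <> Wh /\ forall s, R w s -> v s phi <> W0)) /\
       (v w (FBox phi) = W0 <-> (v w phi <> Wh /\ exists s, R w s /\ v s phi = W0))).

Definition satisfiable_in (W : Type) (R : W -> W -> Prop) (v : W -> Fm -> wk)
  (phi : Fm) : Prop :=
  exists w : W, v w phi <> W0.

(* Filtration through the subformulas of phi.  A world is replaced by its
   type, the tuple of values it gives to the subformulas of phi; two types are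
   related when some of their representatives are, and the semantics on types
   is then determined by the values of the variables.  Only the box clause
   needs care: if the type of w has a successor type at which g is 0, then
   some world w' of the same type as w has a successor at which g is 0, so
   Box g is 0 at w' and therefore at w. *)

From HB Require Import structures.
From mathcomp Require Import all_boot.
From Stdlib Require Import ClassicalEpsilon.

Set Implicit Arguments.
Unset Strict Implicit.

Definition wk_to_option (a : wk) : option bool :=
  match a with W0 => None | Wh => Some false | W1 => Some true end.
Definition option_to_wk (o : option bool) : wk :=
  match o with None => W0 | Some false => Wh | Some true => W1 end.
Lemma wk_to_optionK : cancel wk_to_option option_to_wk. Proof. by case. Qed.
HB.instance Definition _ := Finite.copy wk (can_type wk_to_optionK).

Definition Fm_eq_dec (f g : Fm) : {f = g} + {f <> g}.
Proof. decide equality; exact: PeanoNat.Nat.eq_dec. Defined.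
HB.instance Definition _ := comparableMixin Fm_eq_dec.

Fixpoint subformulas (f : Fm) : seq Fm :=
  f :: match f with
       | FNeg g | FJ2 g | FBox g => subformulas g
       | FOr g h => subformulas g ++ subformulas h
       | _ => [::]
       end.

Lemma subformulas_self f : f \in subformulas f.
Proof. by case: f => *; rewrite inE eqxx. Qed.

Definition wk_box (a : wk) (P : Prop) : wk :=
  if a is Wh then Wh else if excluded_middle_informative P then W0 else W1.

Lemma wk_box_clauses (S : Type) (succ : S -> Prop) (val : S -> wk) (a b : wk) :
  (b = Wh <-> a = Wh) /\
  (b = W1 <-> a <> Wh /\ forall s, succ s -> val s <> W0) /\
  (b = W0 <-> a <> Wh /\ exists s, succ s /\ val s = W0) <->
  b = wk_box a (exists s, succ s /\ val s = W0).
Proof.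
rewrite /wk_box; case: excluded_middle_informative => P /=;
  case: a; case: b; intuition (try discriminate); firstorder.
Qed.

Lemma wk_box_eq0 a (P : Prop) : a <> Wh -> P -> wk_box a P = W0.
Proof. by rewrite /wk_box; case: excluded_middle_informative; case: a. Qed.

Lemma wk_box_eq0P a (P : Prop) : wk_box a P = W0 -> P.
Proof. by rewrite /wk_box; case: excluded_middle_informative; case: a. Qed.

Lemma eq_wk_box a (P Q : Prop) : (a <> Wh -> (P <-> Q)) -> wk_box a P = wk_box a Q.
Proof.
rewrite /wk_box; case: a => // PQ; have {}PQ : P <-> Q by exact: PQ.
all: by do 2 case: excluded_middle_informative => //=; tauto.
Qed.

Definition pwk_step (W : Type) (R : W -> W -> Prop) (v : W -> Fm -> wk)
    (f : Fm) (w : W) : wk :=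
  match f with
  | FVar n => v w (FVar n)
  | FZero => W0
  | FOne => W1
  | FNeg g => wk_neg (v w g)
  | FJ2 g => wk_J2 (v w g)
  | FOr g h => wk_or (v w g) (v w h)
  | FBox g => wk_box (v w g) (exists s, R w s /\ v s g = W0)
  end.

Lemma PWK_modelE (W : Type) (R : W -> W -> Prop) (v : W -> Fm -> wk) :
  PWK_model W R v <-> inhabited W /\ forall w f, v w f = pwk_step R v f w.
Proof.
split=> -[inhW v_step]; split=> // w.
  have [v0 [v1 [vneg [vJ2 [vor vbox]]]]] := v_step w.
  by case=> [n|||g|g|g|g h] //=; apply/wk_box_clauses/vbox.
do 5 (split; first by move=> *; exact: v_step).
by move=> g; apply/wk_box_clauses; exact: (v_step w (FBox g)).
Qed.

Section Evaluation.
Variables (W : Type) (R : W -> W -> Prop) (atom : W -> nat -> wk).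

Fixpoint eval (f : Fm) (w : W) : wk :=
  match f with
  | FVar n => atom w n
  | FZero => W0
  | FOne => W1
  | FNeg g => wk_neg (eval g w)
  | FJ2 g => wk_J2 (eval g w)
  | FOr g h => wk_or (eval g w) (eval h w)
  | FBox g => wk_box (eval g w) (exists s, R w s /\ eval g s = W0)
  end.

Lemma eval_PWK_model : inhabited W -> PWK_model W R (fun w f => eval f w).
Proof. by move=> inhW; apply/PWK_modelE; split=> // w []. Qed.

End Evaluation.

Section Filtration.
Variables (W : Type) (R : W -> W -> Prop) (v : W -> Fm -> wk) (sf : seq Fm).
Hypothesis v_model : PWK_model W R v.

Definition type_at (w : W) : (size sf).-tuple wk := map_tuple (v w) (in_tuple sf).

Definition type_value (t : (size sf).-tuple wk) (f : Fm) : wk := nth W0 t (index f sf).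

Lemma type_valueE w f : f \in sf -> type_value (type_at w) f = v w f.
Proof. by move=> f_sf; rewrite /type_value (nth_map FZero) ?index_mem ?nth_index. Qed.

Lemma same_type_value w u f : type_at w = type_at u -> f \in sf -> v w f = v u f.
Proof. by move=> wu f_sf; rewrite -!type_valueE // wu. Qed.

Definition filtered_rel (t s : (size sf).-tuple wk) : Prop :=
  exists w u, [/\ type_at w = t, type_at u = s & R w u].

Definition filtered_eval : Fm -> (size sf).-tuple wk -> wk :=
  eval filtered_rel (fun t n => type_value t (FVar n)).

Lemma filtered_eval_type_at f :
  {subset subformulas f <= sf} -> forall w, filtered_eval f (type_at w) = v w f.
Proof.
have /PWK_modelE[_ v_step] := v_model.
elim: f => [n|||g IHg|g IHg|g IHg|g IHg h IHh] f_sf w; rewrite [RHS]v_step //=.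
- by rewrite type_valueE // f_sf ?subformulas_self.
- by rewrite IHg // => x gx; rewrite f_sf // inE gx orbT.
- by rewrite IHg // => x gx; rewrite f_sf // inE gx orbT.
- have g_sf : {subset subformulas g <= sf} by move=> x gx; rewrite f_sf // inE gx orbT.
  have box_step u : v u (FBox g) = wk_box (v u g) (exists s, R u s /\ v s g = W0).
    exact: v_step.
  rewrite IHg //; apply: eq_wk_box => wg; split; last first.
    by case=> u [Rwu ug]; exists (type_at u); split; [exists w, u | rewrite IHg].
  case=> _ [[w' [u [ww' <- Rw'u]]] ug]; apply: (@wk_box_eq0P (v w g)).
  rewrite -box_step (same_type_value (esym ww')) ?f_sf ?subformulas_self // box_step.
  apply: wk_box_eq0; last by exists u; rewrite -IHg.
  by rewrite (same_type_value ww') ?g_sf ?subformulas_self.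
- by rewrite IHg ?IHh // => x hx; rewrite f_sf // inE mem_cat hx ?orbT.
Qed.

End Filtration.

Theorem mainTheorem12 (phi : Fm) :
  (exists (W : Type) (R : W -> W -> Prop) (v : W -> Fm -> wk),
      PWK_model W R v /\ satisfiable_in W R v phi) ->
  exists (W : finType) (R : W -> W -> Prop) (v : W -> Fm -> wk),
      PWK_model W R v /\ satisfiable_in W R v phi.
Proof.
case=> W [R [v [v_model [w vw]]]]; set sf := subformulas phi.
exists ((size sf).-tuple wk : finType), (filtered_rel R v (sf := sf)).
exists (fun t f => filtered_eval R v (sf := sf) f t); split.
  exact/eval_PWK_model/(inhabits (type_at v sf w)).
by exists (type_at v sf w); rewrite filtered_eval_type_at.
Qed.
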